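(* Let $X$ be a reflexive real Banach space. Then for every nonempty closed convex subset $V$ of $X$, the triplet $(X,V,\mathcal{CB}(X))$ has weak-$\mathscr{F}_{cmc}$-SACP, where $\mathcal{CB}(X)$ is the family of all nonempty closed bounded subsets of $X$ and $\mathscr{F}_{cmc}$ is the class of all convex, monotone, coercive functions $f:\ell_\infty^+(F)\to[0,\infty)$, $F\in\mathcal{CB}(X)$.
   Context: For a nonempty closed bounded set $F\subseteq X$, $\ell_\infty^+(F)$ is the set of bounded functions $\varphi:F\to[0,\infty)$ with the coordinatewise order and sup norm $\|\varphi\|_\infty$. $f:\ell_\infty^+(F)\to[0,\infty)$ is monotone if $\varphi_1\le\varphi_2$ implies $f(\varphi_1)\le f(\varphi_2)$, and coercive if $f(\varphi)\to\infty$ as $\|\varphi\|_\infty\to\infty$. For $x\in X$, $r_f(x,F)=f((\|x-a\|)_{a\in F})$ and $\mathrm{rad}_V^f(F)=\inf_{v\in V}r_f(v,F)$. The triplet $(X,V,\mathfrak{F})$ has weak-$\mathscr{F}$-SACP if for every $F\in\mathfrak{F}$, every $f\in\mathscr{F}$ defined on $\ell_\infty^+(F)$ and every sequence $(v_n)\subseteq V$ with $r_f(v_n,F)\to\mathrm{rad}_V^f(F)$, $(v_n)$ has a weakly convergent subsequence. *)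

From HB Require Import structures.
From mathcomp Require Import all_boot all_order all_algebra.
From mathcomp Require Import all_classical all_reals all_analysis.
Set Implicit Arguments. Unset Strict Implicit. Unset Printing Implicit Defensive.
Import Order.TTheory GRing.Theory Num.Theory.
Import numFieldNormedType.Exports.
Local Open Scope classical_set_scope.
Local Open Scope ring_scope.

Section Defs.
Variables (R : realType) (X : normedModType R).

Definition is_clf (phi : X -> R) : Prop :=
  (forall (a : R) (x y : X), phi (a *: x + y) = a * phi x + phi y) /\
  continuous phi.

(* reflexivity: the canonical embedding X -> X^** is surjective, i.e. every
   bounded linear functional Phi on X^* is evaluation at some x.  Boundedness
   |Phi phi| <= C ||phi|| is written out via the operator norm:
   ||phi|| <= M iff |phi x| <= M ||x|| for all x. *)
Definition reflexive_space : Prop :=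
  forall Phi : (X -> R) -> R,
    (forall (a : R) (phi psi : X -> R), is_clf phi -> is_clf psi ->
        Phi (fun x => a * phi x + psi x) = a * Phi phi + Phi psi) ->
    (exists C : R, forall (phi : X -> R) (M : R), is_clf phi -> 0 <= M ->
        (forall x, `|phi x| <= M * `|x|) -> `|Phi phi| <= C * M) ->
    exists x : X, forall phi, is_clf phi -> Phi phi = phi x.

Definition weak_cvg (u : nat -> X) (x : X) : Prop :=
  forall phi, is_clf phi -> (fun n => phi (u n)) @ \oo --> phi x.

Definition convex_set_X (V : set X) : Prop :=
  forall x y (t : R), V x -> V y -> 0 <= t -> t <= 1 ->
    V (t *: x + (1 - t) *: y).

Definition linf_pos (F : set X) (phi : {a : X | F a} -> R) : Prop :=
  (forall a, 0 <= phi a) /\ (exists M : R, forall a, phi a <= M).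

Definition supnorm (F : set X) (phi : {a : X | F a} -> R) : R :=
  sup (range (fun a => `|phi a|)).

Definition F_cmc (F : set X) (f : ({a : X | F a} -> R) -> R) : Prop :=
  (forall phi, linf_pos phi -> 0 <= f phi) /\
  (forall phi1 phi2 (t : R), linf_pos phi1 -> linf_pos phi2 -> 0 <= t -> t <= 1 ->
     f (fun a => t * phi1 a + (1 - t) * phi2 a) <= t * f phi1 + (1 - t) * f phi2) /\
  (forall phi1 phi2, linf_pos phi1 -> linf_pos phi2 ->
     (forall a, phi1 a <= phi2 a) -> f phi1 <= f phi2) /\
  (forall M : R, exists K : R, forall phi, linf_pos phi ->
     K <= supnorm phi -> M <= f phi).

Definition r_f (F : set X) (f : ({a : X | F a} -> R) -> R) (x : X) : R :=
  f (fun a => `|x - sval a|).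

Definition rad (F : set X) (f : ({a : X | F a} -> R) -> R) (V : set X) : R :=
  inf [set r_f f v | v in V].

Definition weak_Fcmc_SACP (V : set X) : Prop :=
  forall F : set X, F !=set0 -> closed F -> [bounded a | a in F] ->
  forall f : ({a : X | F a} -> R) -> R, F_cmc f ->
  forall v : nat -> X, (forall n, V (v n)) ->
    (fun n => r_f f (v n)) @ \oo --> rad f V ->
    exists (sigma : nat -> nat) (x : X),
      {homo sigma : m n / (m < n)%N >-> (m < n)%N} /\ weak_cvg (v \o sigma) x.
End Defs.

From Pilot Require Import Defs.
From HB Require Import structures.
From mathcomp Require Import all_boot all_order all_algebra.
From mathcomp Require Import all_classical all_reals all_analysis.
From mathcomp Require Import lra.

(* A sequence minimizing [r_f f] is bounded: by coercivity, a large [|v|]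
   makes [sup_(a in F) |v - a|], hence [r_f f v], large.  So it suffices that
   bounded sequences in a reflexive space have weakly convergent subsequences.
   Along an ultrafilter refining the Frechet filter, [phi (u n)] converges for
   every [phi] in X^*; the limit is a bounded linear functional of [phi], i.e.
   evaluation at some [x] by reflexivity.  To replace the ultrafilter by a
   subsequence, take norming functionals [psi c] (Hahn-Banach) for the
   countably many rational combinations of the [u n], which are dense in their
   span, and extract diagonally so that every [psi c (u (sigma n))] tends to
   [psi c x].  Another weak cluster point [x'] of [u \o sigma] then agrees with
   [x] on every [psi c] and on every functional vanishing on all [u n]; by
   Hahn-Banach for the distance to the span this forces [x' = x]. *)

Set Implicit Arguments. Unset Strict Implicit. Unset Printing Implicit Defensive.
Import Order.TTheory GRing.Theory Num.Theory.
Import numFieldNormedType.Exports.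
Local Open Scope classical_set_scope.
Local Open Scope ring_scope.

Section RealInf.
Variable R : realType.

Lemma inf_le_scale (S1 S2 : set R) a : 0 < a -> S1 !=set0 -> has_lbound S2 ->
  (forall s, S1 s -> S2 (a * s)) -> inf S2 <= a * inf S1.
Proof.
move=> a0 S1ne S2lb aS; rewrite -ler_pdivrMl //.
apply: lb_le_inf => // s /aS /(ge_inf S2lb).
by rewrite ler_pdivrMl.
Qed.

Lemma le_inf_add (S1 S2 : set R) c : S1 !=set0 -> S2 !=set0 ->
  (forall s t, S1 s -> S2 t -> c <= s + t) -> c <= inf S1 + inf S2.
Proof.
move=> S1ne S2ne cS; rewrite -lerBlDl; apply: lb_le_inf => // t S2t.
rewrite lerBlDl -lerBlDr; apply: lb_le_inf => // s S1s.
by rewrite lerBlDr; exact: cS.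
Qed.

Lemma inf_min (S : set R) m : S m -> lbound S m -> inf S = m.
Proof.
move=> Sm mS; apply/eqP; rewrite eq_le lb_le_inf ?andbT //; last by exists m.
by apply: ge_inf => //; exists m.
Qed.

End RealInf.

Section HahnBanach.
Variables (R : realType) (V : lmodType R).

Definition sublinear (p : V -> R) :=
  (forall x y, p (x + y) <= p x + p y) /\ (forall a x, 0 <= a -> p (a *: x) = a * p x).

Definition linear_functional (f : V -> R) :=
  forall a x y, f (a *: x + y) = a * f x + f y.

Lemma sublinear0 p : sublinear p -> p 0 = 0.
Proof. by case=> _ pZ; rewrite -(scale0r 0) pZ // mul0r. Qed.

Lemma sublinear_oppr_le p : sublinear p -> forall x, - p (- x) <= p x.
Proof.
move=> sp x; have := sp.1 x (- x).
by rewrite subrr (sublinear0 sp) -lerBlDr sub0r.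
Qed.

Lemma linear_functional0 f : linear_functional f -> f 0 = 0.
Proof. by move=> lf; have := lf 1 0 0; rewrite scale1r addr0 mul1r; lra. Qed.

Lemma linear_functionalN f : linear_functional f -> forall x, f (- x) = - f x.
Proof.
move=> lf x; have := lf (-1) x 0.
by rewrite addr0 linear_functional0 // addr0 scaleN1r mulN1r.
Qed.

Lemma linear_functionalB f : linear_functional f -> forall x y, f (x - y) = f x - f y.
Proof. by move=> lf x y; rewrite addrC -scaleN1r lf mulN1r addrC. Qed.

Lemma sublinear_inf (S : V -> set R) :
  (forall x, S x !=set0) -> (forall x, has_lbound (S x)) ->
  S 0 0 -> lbound (S 0) 0 ->
  (forall x y s t, S x s -> S y t -> exists2 w, S (x + y) w & w <= s + t) ->
  (forall b x s, 0 < b -> S x s -> S (b *: x) (b * s)) ->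
  sublinear (fun x => inf (S x)).
Proof.
move=> Sne Slb S00 S0lb SD SZ; split.
  move=> x y; apply: le_inf_add => // s t Sxs Syt.
  have [w Sw ws] := SD _ _ _ _ Sxs Syt.
  exact: le_trans (ge_inf (Slb _) Sw) ws.
have inf_scale_le b x : 0 < b -> inf (S (b *: x)) <= b * inf (S x).
  by move=> b0; apply: inf_le_scale => // s; exact: SZ.
move=> a x; rewrite le_eqVlt => /predU1P[<-|a0].
  by rewrite scale0r mul0r; exact: inf_min.
apply/eqP; rewrite eq_le inf_scale_le //=.
have := inf_scale_le a^-1 (a *: x).
by rewrite invr_gt0 scalerA mulVf ?gt_eqF // scale1r ler_pdivlMl //; apply.
Qed.

Definition ray_set (q : V -> R) (z x : V) :=
  [set q (x + t *: z) - t * q z | t in [set t : R | 0 <= t]].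

Definition ray_inf (q : V -> R) (z x : V) := inf (ray_set q z x).

Section RayInf.
Variables (q : V -> R) (z : V).
Hypothesis sq : sublinear q.

Let ray_set_lb x : lbound (ray_set q z x) (- q (- x)).
Proof.
move=> _ [t t0 <-]; have := sq.1 (x + t *: z) (- x).
rewrite addrC addKr sq.2 //; lra.
Qed.

Let ray_inf_le_at x t : 0 <= t -> ray_inf q z x <= q (x + t *: z) - t * q z.
Proof. by move=> t0; apply: ge_inf; [exists (- q (- x)); exact: ray_set_lb | exists t]. Qed.

Lemma ray_inf_le x : ray_inf q z x <= q x.
Proof. by have := ray_inf_le_at x (lexx 0); rewrite scale0r addr0 mul0r subr0. Qed.

Lemma ray_inf_oppr_le : ray_inf q z (- z) <= - q z.
Proof.
have := ray_inf_le_at (- z) ler01.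
by rewrite scale1r mul1r addNr (sublinear0 sq) sub0r.
Qed.

Lemma ray_inf_sublinear : sublinear (ray_inf q z).
Proof.
apply: sublinear_inf.
- move=> x; exists (q x), 0; first exact: lexx.
  by rewrite scale0r addr0 mul0r subr0.
- by move=> x; exists (- q (- x)); exact: ray_set_lb.
- exists 0; first exact: lexx.
  by rewrite scale0r addr0 mul0r subr0 (sublinear0 sq).
- by move=> _ [t t0 <-]; rewrite add0r sq.2 // subrr.
- move=> x y _ _ [s s0 <-] [t t0 <-].
  exists (q (x + y + (s + t) *: z) - (s + t) * q z).
    by exists (s + t) => //; exact: addr_ge0.
  rewrite addrACA -opprD -mulrDl lerD2r scalerDl addrACA; exact: sq.1.
- move=> b x _ b0 [t t0 <-]; exists (b * t); first exact: mulr_ge0 (ltW b0) t0.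
  by rewrite mulrBr -(sq.2 _ _ (ltW b0)) scalerDr scalerA mulrA.
Qed.

End RayInf.

(* [ray_inf q z] is a sublinear minorant of [q] that is at most [- q z] at
   [- z], so a minimal [q] is odd; an odd sublinear functional is linear. *)
Lemma minimal_sublinear_linear q : sublinear q ->
  (forall r, sublinear r -> (forall x, r x <= q x) -> r = q) -> linear_functional q.
Proof.
move=> sq qmin.
have qN z : q (- z) = - q z.
  have qz := qmin _ (ray_inf_sublinear z sq) (ray_inf_le z sq).
  apply/eqP; rewrite eq_le -{1}qz ray_inf_oppr_le //= lerNl.
  exact: sublinear_oppr_le.
have qD x y : q (x + y) = q x + q y.
  apply/eqP; rewrite eq_le sq.1 /=.
  by have := sq.1 (x + y) (- y); rewrite addrK qN; lra.
move=> a x y; rewrite qD; congr (_ + _).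
have [a0|a0] := leP 0 a; first by rewrite sq.2.
have := sq.2 (- a) x; rewrite scaleNr qN oppr_ge0 => /(_ (ltW a0)); lra.
Qed.

Lemma chain_inf_sublinear (B : set (V -> R)) : B !=set0 ->
  (forall g, B g -> sublinear g) -> (forall x, has_lbound [set g x | g in B]) ->
  (forall g1 g2, B g1 -> B g2 -> (forall x, g1 x <= g2 x) \/ (forall x, g2 x <= g1 x)) ->
  sublinear (fun x => inf [set g x | g in B]).
Proof.
move=> [g0 Bg0] Bsub Blb Btot; apply: sublinear_inf => //.
- by move=> x; exists (g0 x), g0.
- by exists g0; rewrite // (sublinear0 (Bsub _ Bg0)).
- by move=> _ [g Bg <-]; rewrite (sublinear0 (Bsub _ Bg)).
- move=> x y _ _ [g1 B1 <-] [g2 B2 <-].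
  have le_sum g : B g -> (forall x, g x <= g1 x) -> (forall x, g x <= g2 x) ->
      exists2 w, [set h (x + y) | h in B] w & w <= g1 x + g2 y.
    move=> Bg g1g g2g; exists (g (x + y)); first by exists g.
    exact: le_trans ((Bsub _ Bg).1 x y) (lerD (g1g x) (g2g y)).
  by case: (Btot _ _ B1 B2) => h; [apply: (le_sum g1) | apply: (le_sum g2)].
- by move=> b x _ b0 [g Bg <-]; exists g; rewrite // (Bsub _ Bg).2 // ltW.
Qed.

Lemma minimal_sublinear_below p : sublinear p ->
  exists2 q, sublinear q /\ (forall x, q x <= p x) &
    forall r, sublinear r -> (forall x, r x <= q x) -> r = q.
Proof.
move=> sp; pose P q := sublinear q /\ (forall x, q x <= p x).
pose below (s t : {q | P q}) := `[< forall x, sval t x <= sval s x >].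
have [t tmin] : exists t, forall s, below t s -> s = t.
  apply: Zorn.
  - by move=> s; apply/asboolP.
  - move=> r s t /asboolP rs /asboolP st; apply/asboolP => x.
    exact: le_trans (st x) (rs x).
  - move=> [s Ps] [t Pt] /asboolP st /asboolP ts; apply: eq_exist.
    by apply: funext => x; apply/eqP; rewrite eq_le st ts.
  move=> A Atot; pose B := [set sval s | s in A] `|` [set p].
  have PB g : B g -> P g by case=> [[s _ <-]|->]; [exact: svalP | split].
  have Blb x : has_lbound [set g x | g in B].
    exists (- p (- x)) => _ [g /PB[sg gp] <-].
    by apply: le_trans (sublinear_oppr_le sg x); rewrite lerN2.
  have Btot g1 g2 : B g1 -> B g2 ->
      (forall x, g1 x <= g2 x) \/ (forall x, g2 x <= g1 x).
    case=> [[s1 A1 <-]|->] [[s2 A2 <-]|->].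
    - by case: (Atot _ _ A1 A2) => /asboolP; [right | left].
    - by left; case: (svalP s1).
    - by right; case: (svalP s2).
    - by left.
  have Pinf : P (fun x => inf [set g x | g in B]).
    split; first by apply: chain_inf_sublinear => //; [exists p; right | move=> g /PB[]].
    by move=> x; apply: ge_inf => //; exists p => //; right.
  exists (exist P _ Pinf) => s As; apply/asboolP => x /=.
  by apply: ge_inf => //; exists (sval s) => //; left; exists s.
exists (sval t); first exact: (svalP t).
move=> r sr rt; have Pr : P r by split => // x; exact: le_trans (rt x) ((svalP t).2 x).
by have := tmin (exist P r Pr) (asboolT rt) => /(congr1 sval).
Qed.

Theorem hahn_banach (p : V -> R) (x0 : V) : sublinear p ->
  exists phi, [/\ linear_functional phi, forall x, phi x <= p x & phi x0 = p x0].
Proof.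
move=> sp; have sp0 := ray_inf_sublinear x0 sp.
have [q [sq qp0] qmin] := minimal_sublinear_below sp0.
have lq := minimal_sublinear_linear sq qmin.
have qp x : q x <= p x by exact: le_trans (qp0 x) (ray_inf_le x0 sp x).
exists q; split => //; apply/eqP; rewrite eq_le qp /=.
have := qp0 (- x0); rewrite linear_functionalN //.
have := ray_inf_oppr_le x0 sp; lra.
Qed.

End HahnBanach.

Section ContinuousLinearFunctionals.
Variables (R : realType) (X : normedModType R).

Let linear_of (phi : X -> R) (lphi : linear_functional phi) : {linear X -> R} :=
  HB.pack phi (GRing.isLinear.Build _ _ _ _ phi (fun a x y => lphi a x y)).

Lemma norm_sublinear : sublinear (fun x : X => `|x|).
Proof. by split=> [|a x a0]; [exact: ler_normD | rewrite normrZ ger0_norm]. Qed.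

Lemma clf_le_norm (phi : X -> R) C : linear_functional phi ->
  (forall x, phi x <= C * `|x|) -> is_clf phi.
Proof.
move=> lphi phiC; split => //.
have normC x : `|phi x| <= C * `|x|.
  rewrite ler_norml phiC andbT lerNl -linear_functionalN // -normrN.
  exact: phiC.
apply: (@bounded_linear_continuous _ _ _ (linear_of lphi)); apply/linear_boundedP.
near=> r => x; apply: le_trans (normC x) (ler_wpM2r (normr_ge0 x) _).
by near: r; exact: nbhs_pinfty_ge (num_real C).
Unshelve. all: end_near. Qed.

Lemma clf_bounded (phi : X -> R) : is_clf phi ->
  exists2 M, 0 <= M & forall x, `|phi x| <= M * `|x|.
Proof.
case=> lphi cphi; have := @continuous_linear_bounded _ _ _ 0 (linear_of lphi) (cphi 0).
by move=> /linear_boundedP /pinfty_ex_gt0 [M M0 phiM]; exists M => //; exact: ltW.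
Qed.

End ContinuousLinearFunctionals.

Section UltrafilterLimits.
Variables (R : realType) (T : Type) (G : set_system T).
Hypothesis GU : UltraFilter G.

Lemma ultra_cvg_bounded (a : T -> R) K : G [set t | `|a t| <= K] ->
  exists l : R, a @ G --> l.
Proof.
move=> GK; have aK : (a @ G) `[- K, K]%classic.
  apply: (@filterS _ G _ [set t | `|a t| <= K]) GK => t /=.
  by rewrite in_itv /= -ler_norml.
have [l [_ cl]] := @segment_compact R (- K) K (a @ G) _ aK.
exists l => U /= Ul.
have [//|GnU] := in_ultra_setVsetC (a @^-1` U) GU.
have : (a @ G) (~` U) by rewrite /= -preimage_setC.
by move=> /cl /(_ Ul) [y [/= ? ?]].
Qed.

Lemma reflexive_weak_ultralimit (X : normedModType R) (w : T -> X) B :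
  reflexive_space X -> G [set t | `|w t| <= B] ->
  exists x, forall phi, is_clf phi -> phi \o w @ G --> phi x.
Proof.
move=> refl GB.
have phiB (phi : X -> R) M : 0 <= M -> (forall x, `|phi x| <= M * `|x|) ->
    G [set t | `|(phi \o w) t| <= M * B].
  move=> M0 phiM; apply: filterS GB => t /= wB.
  by apply: le_trans (phiM _) _; rewrite ler_wpM2l.
have limP phi : is_clf phi -> phi \o w @ G --> lim (phi \o w @ G).
  move=> /clf_bounded [M M0 /(phiB _ _ M0) /ultra_cvg_bounded [l phil]].
  by rewrite (cvg_lim _ phil).
have [x limx] : exists x : X, forall phi, is_clf phi -> lim (phi \o w @ G) = phi x.
  apply: refl.
  - move=> a phi psi cphi cpsi; apply: cvg_lim => //.
    by apply: cvgD; [apply: cvgM; [exact: cvg_cst | exact: limP] | exact: limP].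
  - exists `|B| => phi M cphi M0 phiM.
    apply: cvgr_to_le (cvg_norm (limP _ cphi)) _.
    apply: filterS (phiB _ _ M0 phiM) => t /= /le_trans; apply.
    by rewrite mulrC ler_wpM2r // ler_norm.
by exists x => phi cphi; rewrite -limx //; exact: limP.
Qed.

End UltrafilterLimits.

Section Subsequences.

Lemma increasing_extraction (P : nat -> nat -> Prop) :
  (forall k m, exists n, (m <= n)%N /\ P k n) ->
  exists2 tau : nat -> nat,
    {homo tau : m n / (m < n)%N >-> (m < n)%N} & forall k, P k (tau k).
Proof.
move=> hP; have [f hf] := @choice _ _ (fun (km : nat * nat) n => (km.2 <= n)%N /\ P km.1 n)
  (fun km => hP km.1 km.2).
pose tau := fix tau k := if k is k'.+1 then f (k, (tau k').+1) else f (0, 0)%N.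
exists tau; last by case=> [|k]; [exact: (hf (0, 0)%N).2 | exact: (hf (k.+1, _)).2].
apply: homo_ltn; first by move=> ? ? ?; exact: ltn_trans.
by move=> k; exact: (hf (k.+1, (tau k).+1)).1.
Qed.

Lemma increasing_ge_id (tau : nat -> nat) :
  {homo tau : m n / (m < n)%N >-> (m < n)%N} -> forall n, (n <= tau n)%N.
Proof. by move=> tau_incr; elim=> // n ih; exact: leq_ltn_trans ih (tau_incr _ _ _). Qed.

Lemma increasing_cvg_oo (tau : nat -> nat) :
  {homo tau : m n / (m < n)%N >-> (m < n)%N} -> tau @ \oo --> \oo.
Proof.
move=> tau_incr A [N _ NA]; exists N => // n /= Nn; apply: NA.
exact: leq_trans Nn (increasing_ge_id tau_incr n).
Qed.

Variable R : realType.

Lemma cvg_finer_eq (G : set_system nat) (f : nat -> R) (l l' : R) :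
  ProperFilter G -> \oo `<=` G -> f @ \oo --> l -> f @ G --> l' -> l' = l.
Proof.
move=> PG ooG fl fl'; apply: (cvg_unique _ fl') => //.
by move=> U /fl /ooG.
Qed.

Lemma diagonal_extraction (G : set_system nat) (f : nat -> nat -> R) (l : nat -> R) :
  ProperFilter G -> \oo `<=` G -> (forall j, f j @ G --> l j) ->
  exists2 sigma : nat -> nat, {homo sigma : m n / (m < n)%N >-> (m < n)%N} &
    forall j, f j \o sigma @ \oo --> l j.
Proof.
move=> PG ooG fl.
have near_first k m : exists n, (m <= n)%N /\
    forall j : 'I_k.+1, `|l j - f j n| < k.+1%:R^-1.
  have k_gt0 : 0 < k.+1%:R^-1 :> R by rewrite invr_gt0 ltr0n.
  have Gk : G [set n | forall j : 'I_k.+1, `|l j - f j n| < k.+1%:R^-1].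
    by apply: filter_forall => j; exact: (cvgrPdist_lt _ _).1 (fl j) _ k_gt0.
  have Gm : G [set n | (m <= n)%N] by apply: ooG; exists m.
  by have [n [mn fn]] := filter_ex (filterI Gm Gk); exists n.
have [sigma sigma_incr fsigma] := increasing_extraction near_first.
exists sigma => // j; apply/cvgrPdist_lt => e e0; near=> k.
have jk : (j < k.+1)%N by near: k; exact: nbhs_infty_ge.
apply: lt_trans (fsigma k (Ordinal jk)) _.
by near: k; exact: near_infty_natSinv_lt (PosNum e0).
Unshelve. all: end_near. Qed.

Lemma not_cvg_extraction (f : nat -> R) (l : R) : ~ (f @ \oo --> l) ->
  exists e, 0 < e /\ exists2 tau : nat -> nat,
    {homo tau : m n / (m < n)%N >-> (m < n)%N} & forall n, e <= `|l - f (tau n)|.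
Proof.
move=> fNl.
have [e [e0 often]] : exists e, 0 < e /\ forall m, exists n, (m <= n)%N /\ e <= `|l - f n|.
  apply: contrapT => not_often; apply: fNl; apply/cvgrPdist_lt => e e0.
  apply: contrapT => not_near; apply: not_often; exists e; split => // m.
  apply: contrapT => not_after; apply: not_near; exists m => // n /= mn.
  by rewrite ltNge; apply/negP => en; apply: not_after; exists n.
have [tau tau_incr far] := increasing_extraction (fun _ => often).
by exists e; split => //; exists tau.
Qed.

End Subsequences.

Section SequenceSpan.
Variables (R : realType) (X : normedModType R) (u : nat -> X).

Definition seq_span : set X :=
  [set s | exists n (a : nat -> R), s = \sum_(0 <= i < n) a i *: u i].

Definition ratcomb (c : nat * seq int) : X :=
  c.1.+1%:R^-1 *: \sum_(0 <= i < size c.2) (c.2`_i)%:~R *: u i.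

Let sum_widen n N (a : nat -> R) : (n <= N)%N ->
  \sum_(0 <= i < n) a i *: u i = \sum_(0 <= i < N) (if (i < n)%N then a i else 0) *: u i.
Proof.
move=> nN; rewrite (big_nat_widen 0 n N xpredT _ nN) big_mkcond /=.
by apply: eq_bigr => i _; case: ifP => _; rewrite ?scale0r.
Qed.

Lemma seq_span0 : seq_span 0.
Proof. by exists 0%N, (fun _ => 0); rewrite big_geq. Qed.

Lemma seq_spanD s1 s2 : seq_span s1 -> seq_span s2 -> seq_span (s1 + s2).
Proof.
move=> [n1 [a1 ->]] [n2 [a2 ->]].
exists (maxn n1 n2),
  (fun i => (if (i < n1)%N then a1 i else 0) + (if (i < n2)%N then a2 i else 0)).
rewrite (sum_widen a1 (leq_maxl n1 n2)) (sum_widen a2 (leq_maxr n1 n2)) -big_split /=.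
by apply: eq_bigr => i _; rewrite scalerDl.
Qed.

Lemma seq_spanZ b s : seq_span s -> seq_span (b *: s).
Proof.
move=> [n [a ->]]; exists n, (fun i => b * a i).
by rewrite scaler_sumr; apply: eq_bigr => i _; rewrite scalerA.
Qed.

Lemma seq_span_u n : seq_span (u n).
Proof.
exists n.+1, (fun i => if i == n then 1 else 0).
rewrite big_nat_recr //= eqxx scale1r big1_seq ?add0r // => i /andP[_].
rewrite mem_index_iota => /andP[_ ilt]; rewrite ifF ?scale0r //.
by apply/negbTE; rewrite neq_ltn ilt.
Qed.

Lemma ratcomb_dense s e : seq_span s -> 0 < e -> exists c, `|s - ratcomb c| < e.
Proof.
move=> [n [a ->]] e0; pose C := \sum_(0 <= i < n) `|u i|.
pose N := Num.truncn (C / e); have N0 : 0 < N.+1%:R :> R by rewrite ltr0n.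
exists (N, [seq Num.floor (a i * N.+1%:R) | i <- iota 0 n]).
rewrite /ratcomb /= size_map size_iota scaler_sumr -sumrB.
rewrite (eq_big_nat _ _ (F2 := fun i =>
  (a i - (Num.floor (a i * N.+1%:R))%:~R / N.+1%:R) *: u i)); last first.
  move=> i /andP[_ ilt].
  by rewrite (nth_map 0%N) ?size_iota // nth_iota // add0n scalerA -scalerBl mulrC.
apply: le_lt_trans (ler_norm_sum _ _ _) _.
apply: (@le_lt_trans _ _ (\sum_(0 <= i < n) N.+1%:R^-1 * `|u i|)).
  apply: ler_sum => i _; rewrite normrZ ler_wpM2r //.
  set t := a i * N.+1%:R; have /andP[tfloor floort] := floor_itv t.
  have -> : a i = t / N.+1%:R by rewrite /t mulfK // gt_eqF.
  rewrite -mulrBl normrM (gtr0_norm (_ : 0 < N.+1%:R^-1)) ?invr_gt0 //.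
  rewrite ger0_norm ?subr_ge0 //.
  by rewrite ler_piMl ?invr_ge0 ?ltW //; move: floort; rewrite intrD; lra.
rewrite -mulr_sumr -/C mulrC ltr_pdivrMr //.
by have := truncnS_gt (C / e); rewrite -/N ltr_pdivrMr // mulrC.
Qed.

Definition dist_span (z : X) := inf [set `|z - s| | s in seq_span].

Let dist_span_set_ne z : [set `|z - s| | s in seq_span] !=set0.
Proof. by exists `|z - 0|, 0 => //; exact: seq_span0. Qed.

Let dist_span_set_lb z : has_lbound [set `|z - s| | s in seq_span].
Proof. by exists 0 => _ [s _ <-]. Qed.

Lemma dist_span_le z s : seq_span s -> dist_span z <= `|z - s|.
Proof. by move=> span_s; apply: ge_inf => //; exists s. Qed.

Lemma dist_span_le_norm z : dist_span z <= `|z|.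
Proof. by have := dist_span_le z seq_span0; rewrite subr0. Qed.

Lemma dist_span_sublinear : sublinear dist_span.
Proof.
apply: sublinear_inf => //.
- by exists 0; [exact: seq_span0 | rewrite subr0 normr0].
- by move=> _ [s _ <-].
- move=> x y _ _ [s1 span1 <-] [s2 span2 <-].
  exists `|x + y - (s1 + s2)|; first by exists (s1 + s2) => //; exact: seq_spanD.
  by rewrite opprD addrACA; exact: ler_normD.
- move=> b z _ b0 [s span_s <-]; exists (b *: s); first exact: seq_spanZ.
  by rewrite -scalerBr normrZ gtr0_norm.
Qed.

Lemma dist_span_eq0 d :
  (forall chi, is_clf chi -> (forall n, chi (u n) = 0) -> chi d = 0) -> dist_span d = 0.
Proof.
move=> annihilated.
have [chi [lchi chi_dist <-]] := hahn_banach d dist_span_sublinear.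
apply: annihilated => [|n].
  apply: (@clf_le_norm _ _ _ 1 lchi) => x.
  by rewrite mul1r; exact: le_trans (chi_dist x) (dist_span_le_norm x).
have chi_u_le0 s : seq_span s -> chi s <= 0.
  move=> span_s; apply: le_trans (chi_dist s) _.
  by have := dist_span_le s span_s; rewrite subrr normr0.
have := chi_u_le0 _ (seq_spanZ (-1) (seq_span_u n)).
rewrite scaleN1r linear_functionalN //; have := chi_u_le0 _ (seq_span_u n); lra.
Qed.

Definition norming_family (psi : nat * seq int -> X -> R) :=
  forall c, is_clf (psi c) /\ (forall x, psi c x <= `|x|) /\ psi c (ratcomb c) = `|ratcomb c|.

Lemma exists_norming_family : exists psi, norming_family psi.
Proof.
suff /choice [psi hpsi] : forall c, exists f : X -> R,
    is_clf f /\ (forall x, f x <= `|x|) /\ f (ratcomb c) = `|ratcomb c| by exists psi.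
move=> c; have [psi [lpsi psi_le psi_c]] := hahn_banach (ratcomb c) (@norm_sublinear R X).
exists psi; split=> //; apply: (@clf_le_norm _ _ _ 1 lpsi) => x.
by rewrite mul1r.
Qed.

Lemma norming_family_eq0 psi d : norming_family psi ->
  (forall c, psi c d = 0) -> dist_span d = 0 -> d = 0.
Proof.
move=> hpsi psi_d dist_d; apply/normr0_eq0/eqP; rewrite eq_le normr_ge0 andbT.
apply/ler_addgt0Pr => e e0; rewrite add0r.
have e4 : 0 < e / 4 by rewrite divr_gt0.
have [_ [s span_s <-]] := inf_adherent e4 (conj (dist_span_set_ne d) (dist_span_set_lb d)).
rewrite -/(dist_span d) dist_d add0r => ds.
have [c sc] := ratcomb_dense span_s e4; have [cpsi [psi_le psi_c]] := hpsi c.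
have c_le : `|ratcomb c| <= `|ratcomb c - d|.
  by rewrite -psi_c -[psi c (ratcomb c)]subr0 -(psi_d c) -linear_functionalB //; case: cpsi.
have := ler_distD s (ratcomb c) d; have := ler_distD (ratcomb c) d 0; rewrite !subr0.
have := distrC (ratcomb c) d; have := distrC (ratcomb c) s; have := distrC d s.
lra.
Qed.

Lemma weak_limits_eq psi (G G' : set_system nat) (s : nat -> nat) (x x' : X) :
  norming_family psi -> ProperFilter G -> ProperFilter G' ->
  (forall phi, is_clf phi -> phi \o u @ G --> phi x) ->
  (forall phi, is_clf phi -> phi \o (u \o s) @ G' --> phi x') ->
  (forall c, psi c x' = psi c x) -> x' = x.
Proof.
move=> hpsi PG PG' ux ux' psi_eq; apply/eqP; rewrite -subr_eq0; apply/eqP.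
apply: (norming_family_eq0 hpsi).
  by move=> c; rewrite linear_functionalB ?psi_eq ?subrr //; case: (hpsi c) => [[]].
apply: dist_span_eq0 => chi cchi chi_u.
have chi_lim0 (F : set_system nat) (w : nat -> X) y : ProperFilter F ->
    (forall n, chi (w n) = 0) -> chi \o w @ F --> chi y -> chi y = 0.
  move=> PF chi_w wy; apply: (cvg_unique _ wy) => //.
  rewrite (_ : chi \o w = cst 0); first exact: cvg_cst.
  by apply: funext => n /=; rewrite chi_w.
rewrite linear_functionalB; last by case: cchi.
rewrite (chi_lim0 _ _ _ PG' (fun n => chi_u (s n)) (ux' _ cchi)).
by rewrite (chi_lim0 _ _ _ PG chi_u (ux _ cchi)) subrr.
Qed.

End SequenceSpan.

Section WeakSequentialCompactness.
Variables (R : realType) (X : normedModType R).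
Hypothesis refl : reflexive_space X.

Lemma weak_cvg_of_norming_cvg (u : nat -> X) psi (G : set_system nat) x
    (sigma : nat -> nat) B N0 :
  norming_family u psi -> ProperFilter G ->
  (forall phi, is_clf phi -> phi \o u @ G --> phi x) ->
  {homo sigma : m n / (m < n)%N >-> (m < n)%N} ->
  (forall n, (N0 <= n)%N -> `|u n| <= B) ->
  (forall c, psi c \o (u \o sigma) @ \oo --> psi c x) -> weak_cvg (u \o sigma) x.
Proof.
move=> hpsi PG ux sigma_incr uB psix phi cphi; apply: contrapT => phiNx.
have [e [e0 [tau tau_incr far]]] := not_cvg_extraction phiNx.
have s_incr : {homo sigma \o tau : m n / (m < n)%N >-> (m < n)%N}.
  by move=> m n mn; apply: sigma_incr; exact: tau_incr.
have [G' [G'U ooG']] := @ultraFilterLemma nat \oo _.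
have G'B : G' [set n | `|(u \o (sigma \o tau)) n| <= B].
  apply: ooG'; exists N0 => // n /= N0n; apply: uB.
  exact: leq_trans N0n (increasing_ge_id s_incr n).
have [x' ux'] := reflexive_weak_ultralimit G'U refl G'B.
have x'x : x' = x.
  apply: (weak_limits_eq hpsi PG _ ux ux') => c.
  apply: (cvg_finer_eq _ ooG' _ (ux' _ (hpsi c).1)).
  exact: cvg_comp (increasing_cvg_oo tau_incr) (psix c).
have [n /= phin] := filter_ex ((cvgrPdist_lt _ _).1 (ux' _ cphi) e e0).
by have := far n; rewrite -x'x /=; lra.
Qed.

Theorem reflexive_bounded_weak_subseq (u : nat -> X) B N0 :
  (forall n, (N0 <= n)%N -> `|u n| <= B) ->
  exists (sigma : nat -> nat) (x : X),
    {homo sigma : m n / (m < n)%N >-> (m < n)%N} /\ weak_cvg (u \o sigma) x.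
Proof.
move=> uB; have [G [GU ooG]] := @ultraFilterLemma nat \oo _.
have GB : G [set n | `|u n| <= B] by apply: ooG; exists N0.
have [x ux] := reflexive_weak_ultralimit GU refl GB.
have [psi hpsi] := exists_norming_family u.
pose psi_ j := psi (odflt (0%N, [::]) (unpickle j)).
have [sigma sigma_incr psix] := @diagonal_extraction _ G (fun j => psi_ j \o u)
  (fun j => psi_ j x) _ ooG (fun j => ux _ (hpsi _).1).
exists sigma, x; split => //.
apply: (weak_cvg_of_norming_cvg hpsi _ ux sigma_incr uB) => c.
by have := psix (pickle c); rewrite /psi_ pickleK.
Qed.

End WeakSequentialCompactness.

Section MinimizingSequences.
Variables (R : realType) (X : normedModType R) (F : set X).
Hypothesis Fbd : [bounded a | a in F].

Let dist_bounded x : exists C, forall a : {a | F a}, `|x - sval a| <= C.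
Proof.
case: Fbd => M [_ FM]; exists (`|x| + (M + 1)) => a.
apply: le_trans (ler_normB _ _) _; rewrite lerD2l.
by apply: (FM (M + 1)); [rewrite ltrDl | exact: svalP].
Qed.

Lemma linf_pos_dist x : linf_pos (fun a : {a | F a} => `|x - sval a|).
Proof. by split=> [a|]; [exact: normr_ge0 | exact: dist_bounded]. Qed.

Lemma dist_le_supnorm x a : F a ->
  `|x - a| <= supnorm (fun a : {a | F a} => `|x - sval a|).
Proof.
move=> Fa; have [C xC] := dist_bounded x.
apply: sup_upper_bound; last by exists (exist F a Fa) => //=; rewrite normr_id.
split; first by exists `| `|x - a| |, (exist F a Fa).
by exists C => _ [b _ <-]; rewrite normr_id.
Qed.

Lemma r_f_sublevel_bounded (f : ({a : X | F a} -> R) -> R) : F !=set0 -> F_cmc f ->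
  forall M, exists B, forall x, r_f f x <= M -> `|x| <= B.
Proof.
move=> [a0 Fa0] [_ [_ [_ coercive]]] M; have [K fK] := coercive (M + 1).
exists (`|K| + `|a0|) => x fxM; rewrite leNgt; apply/negP => x_large.
have K_le : K <= supnorm (fun a : {a | F a} => `|x - sval a|).
  apply: le_trans (ler_norm K) (le_trans _ (dist_le_supnorm x Fa0)).
  by have := ler_distD a0 x 0; rewrite !subr0; lra.
by have := fK _ (linf_pos_dist x) K_le; rewrite /r_f in fxM; lra.
Qed.

End MinimizingSequences.

Theorem theorem2p3 (R : realType) (X : completeNormedModType R) :
  reflexive_space X ->
  forall V : set X, V !=set0 -> closed V -> convex_set_X V ->
  weak_Fcmc_SACP V.
Proof.
move=> refl V _ _ _ F F0 _ Fbd f fcmc v _ v_min.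
have [B vB] := r_f_sublevel_bounded Fbd F0 fcmc (Defs.rad f V + 1).
have rad_lt : Defs.rad f V < Defs.rad f V + 1 by rewrite ltrDl.
have [N0 _ vN0] := cvgr_lt _ v_min _ rad_lt.
apply: (reflexive_bounded_weak_subseq refl (N0 := N0)) => n /vN0 /ltW.
exact: vB.
Qed.
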